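(* Let $\mathfrak g$ be a finite-dimensional Lie algebra over a field $\mathbb K$ of characteristic zero and $\mathfrak h\subset\mathfrak g$ a commutative ideal. Let $\Psi:\mathfrak h^*\to\mathfrak g$ be a polynomial map with $\Psi(h)\in\mathrm{St}(h)$ for all $h\in\mathfrak h^*$, and set $f_\Psi(x)=\langle x,\Psi(\pi(x))\rangle$. Then $f_\Psi\in\operatorname{Ann}(\mathfrak h)$. Moreover, the polynomial maps with this property form a Lie algebra under $[\Psi_1,\Psi_2](h)=[\Psi_1(h),\Psi_2(h)]$, and $\Psi\mapsto f_\Psi$ is a Lie algebra homomorphism into $S(\mathfrak g)$: $\{f_{\Psi_1},f_{\Psi_2}\}=f_{[\Psi_1,\Psi_2]}$.
   Context: $\pi:\mathfrak g^*\to\mathfrak h^*$ is restriction. For $h\in\mathfrak h^*$, $\mathrm{St}(h)=\{\xi\in\mathfrak g\mid\langle h,[\xi,\eta]\rangle=0\ \forall\eta\in\mathfrak h\}$. $S(\mathfrak g)$ is the polynomial algebra on $\mathfrak g^*$ with Lie–Poisson bracket $\{f,g\}(x)=\langle x,[df(x),dg(x)]\rangle$, and $\operatorname{Ann}(\mathfrak h)=\{f\in S(\mathfrak g)\mid\{f,\eta\}=0\ \forall\eta\in\mathfrak h\}$. *)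

From HB Require Import structures.
From mathcomp Require Import all_boot all_order all_algebra.
From mathcomp Require Import mpoly.
Set Implicit Arguments. Unset Strict Implicit. Unset Printing Implicit Defensive.
Import Order.TTheory GRing.Theory Num.Theory.
Local Open Scope ring_scope.

(* g = K^n (row vectors) with basis e_0..e_{n-1}; the bracket is given by
   structure constants c : [e_i, e_j] = \sum_k c i j k e_k. *)
Definition lieb (K : fieldType) (n : nat) (c : 'I_n -> 'I_n -> 'I_n -> K)
  (u v : 'rV[K]_n) : 'rV[K]_n :=
  \row_k \sum_(i < n) \sum_(j < n) u 0 i * v 0 j * c i j k.

Definition is_lie (K : fieldType) (n : nat) (c : 'I_n -> 'I_n -> 'I_n -> K) :=
  (forall u, lieb c u u = 0) /\
  (forall u v w, lieb c u (lieb c v w) + lieb c v (lieb c w u)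
                 + lieb c w (lieb c u v) = 0).

(* h = row space of B : 'M_(m,n), B row-free (rows b_0..b_{m-1} a basis of h).
   h is a commutative ideal. *)
Definition comm_ideal (K : fieldType) (n m : nat) (c : 'I_n -> 'I_n -> 'I_n -> K)
  (B : 'M[K]_(m, n)) :=
  (forall u eta, (eta <= B)%MS -> (lieb c u eta <= B)%MS) /\
  (forall eta1 eta2, (eta1 <= B)%MS -> (eta2 <= B)%MS -> lieb c eta1 eta2 = 0).

(* An element hh of h^* is given by its values hh 0 r = <hh, b_r>.
   Pairing <hh, v> for v in h, via the coordinates of v in the basis B. *)
Definition pairh (K : fieldType) (n m : nat) (B : 'M[K]_(m, n))
  (hh : 'rV[K]_m) (v : 'rV[K]_n) : K :=
  \sum_(r < m) (v *m pinvmx B) 0 r * hh 0 r.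

Definition in_St (K : fieldType) (n m : nat) (c : 'I_n -> 'I_n -> 'I_n -> K)
  (B : 'M[K]_(m, n)) (hh : 'rV[K]_m) (xi : 'rV[K]_n) : Prop :=
  forall eta, (eta <= B)%MS -> pairh B hh (lieb c xi eta) = 0.

(* A polynomial map Psi : h^* -> g, given by its n coordinate polynomials
   in the m coordinates of h^*. *)
Definition polymap (K : fieldType) (n m : nat) := 'I_n -> {mpoly K[m]}.

Definition pmap_eval (K : fieldType) (n m : nat) (Psi : polymap K n m)
  (hh : 'rV[K]_m) : 'rV[K]_n :=
  \row_i (Psi i).@[fun r => hh 0 r].

Definition stab_map (K : fieldType) (n m : nat) (c : 'I_n -> 'I_n -> 'I_n -> K)
  (B : 'M[K]_(m, n)) (Psi : polymap K n m) : Prop :=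
  forall hh, in_St c B hh (pmap_eval Psi hh).

(* pointwise bracket [Psi1, Psi2](h) = [Psi1(h), Psi2(h)] *)
Definition pmap_br (K : fieldType) (n m : nat) (c : 'I_n -> 'I_n -> 'I_n -> K)
  (P1 P2 : polymap K n m) : polymap K n m :=
  fun k => \sum_(i < n) \sum_(j < n) c i j k *: (P1 i * P2 j).

Definition pmap_add (K : fieldType) (n m : nat) (P1 P2 : polymap K n m) : polymap K n m :=
  fun k => P1 k + P2 k.
Definition pmap_scale (K : fieldType) (n m : nat) (a : K) (P : polymap K n m) :
  polymap K n m := fun k => a *: P k.

(* S(g) = {mpoly K[n]}: 'X_i is e_i viewed as a linear function on g^*. *)
Definition linS (K : fieldType) (n : nat) (v : 'rV[K]_n) : {mpoly K[n]} :=
  \sum_(i < n) v 0 i *: 'X_i.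

(* Lie-Poisson bracket {f,g}(x) = <x, [df(x), dg(x)]>, df(x) = \sum_i d_i f(x) e_i *)
Definition lpb (K : fieldType) (n : nat) (c : 'I_n -> 'I_n -> 'I_n -> K)
  (f g : {mpoly K[n]}) : {mpoly K[n]} :=
  \sum_(i < n) \sum_(j < n) \sum_(k < n)
     c i j k *: ('X_k * (mderiv i f * mderiv j g)).

Definition inAnn (K : fieldType) (n m : nat) (c : 'I_n -> 'I_n -> 'I_n -> K)
  (B : 'M[K]_(m, n)) (f : {mpoly K[n]}) : Prop :=
  forall eta, (eta <= B)%MS -> lpb c f (linS eta) = 0.

(* pi : g^* -> h^*, pi(x)_r = <x, b_r> = \sum_i B r i x_i *)
Definition pi_coord (K : fieldType) (n m : nat) (B : 'M[K]_(m, n)) :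
  m.-tuple {mpoly K[n]} := [tuple linS (row r B) | r < m].

Definition fPsi (K : fieldType) (n m : nat) (B : 'M[K]_(m, n)) (Psi : polymap K n m) :
  {mpoly K[n]} :=
  \sum_(i < n) 'X_i * comp_mpoly (pi_coord B) (Psi i).

From HB Require Import structures.
From mathcomp Require Import all_boot all_order all_algebra.
From mathcomp Require Import mpoly.
Set Implicit Arguments. Unset Strict Implicit. Unset Printing Implicit Defensive.
Import Order.TTheory GRing.Theory Num.Theory.
Local Open Scope ring_scope.

(* Everything is checked pointwise on g^*, which is legitimate since K is
   infinite.  By the chain rule the differential of f_Psi at x is
   Psi(pi x) plus an element of h.  In {f_Psi1, f_Psi2}(x) the h-components
   then contribute <x, [h, h]> = 0 and <x, [Psi_i(pi x), h]> = 0 (the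
   stabiliser condition, as [g, h] lies in h), leaving <x, [Psi1, Psi2](pi x)>.
   With Psi2 replaced by a linear function eta of h, whose differential is
   eta itself, the same computation gives {f_Psi, eta} = 0. *)

Section MpolyInduction.
Variable R : comNzRingType.

Lemma mpoly_ring_ind n (P : {mpoly R[n]} -> Prop) :
  (forall a, P a%:MP) -> (forall i, P 'X_i) ->
  (forall p q, P p -> P q -> P (p + q)) -> (forall p q, P p -> P q -> P (p * q)) ->
  forall p, P p.
Proof.
move=> PC PX PD PM; elim/mpolyind => [|a mm p _ _ IH]; first by rewrite -mpolyC0.
apply: (PD) => //; rewrite -mul_mpolyC; apply: (PM) => //.
rewrite mpolyXE_id; elim/big_rec: _ => [|i q _ IHq]; first by rewrite -mpolyC1.
apply: (PM) => //; elim: (mm i) => [|k IHk]; first by rewrite expr0 -mpolyC1.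
by rewrite exprS; apply: PM.
Qed.

Lemma mpoly_morph_eq n (S : nzRingType) (f g : {mpoly R[n]} -> S) :
  {morph f : x y / x + y} -> {morph g : x y / x + y} ->
  {morph f : x y / x * y} -> {morph g : x y / x * y} ->
  (forall a, f a%:MP = g a%:MP) -> (forall i, f 'X_i = g 'X_i) ->
  f =1 g.
Proof.
move=> fD gD fM gM fC fX; apply: mpoly_ring_ind => // p q fgp fgq.
  by rewrite fD gD fgp fgq.
by rewrite fM gM fgp fgq.
Qed.

Lemma mderivXU n (i j : 'I_n) : mderiv i ('X_j : {mpoly R[n]}) = ((j == i)%:R)%:MP.
Proof.
rewrite mderivX mnm1E; case: eqP => [->|_]; last by rewrite scale0r mpolyC0.
have -> : (U_(i) - U_(i))%MM = 0%MM by apply/mnmP => k; rewrite !mnmE subnn.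
by rewrite mpolyX0 scale1r mpolyC1.
Qed.

Lemma mderiv_comp_mpoly n m (lq : m.-tuple {mpoly R[n]}) (p : {mpoly R[m]}) i :
  mderiv i (p \mPo lq) = \sum_(r < m) (mderiv r p \mPo lq) * mderiv i (tnth lq r).
Proof.
elim/mpoly_ring_ind: p i => [a k|j k|x y hx hy k|x y hx hy k].
- rewrite comp_mpolyC mderivC big1 // => r _.
  by rewrite mderivC comp_mpolyC mul0r.
- rewrite comp_mpolyXU (bigD1 j) //= big1 ?addr0.
    by rewrite mderivXU eqxx comp_mpolyC mul1r (tnth_nth 0).
  by move=> r /negbTE nr; rewrite mderivXU eq_sym nr comp_mpolyC mul0r.
- rewrite comp_mpolyD mderivD hx hy -big_split /=.
  by apply: eq_bigr => r _; rewrite mderivD comp_mpolyD mulrDl.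
- rewrite rmorphM /= mderivM hx hy mulr_suml mulr_sumr -big_split.
  apply: eq_bigr => r _; rewrite mderivM comp_mpolyD !rmorphM /= mulrDl.
  by congr (_ + _); rewrite -!mulrA; congr (_ * _); rewrite mulrC.
Qed.

End MpolyInduction.

Section MuniEvaluation.
Variables (R : comNzRingType) (n : nat).

(* The point of R^(n+1) with first coordinates v and last coordinate t,
   split along the same cast as in the definition of [muni]. *)
Definition extend_point (v : 'I_n -> R) (t : R) (i : 'I_n.+1) : R :=
  match split (cast_ord (esym (addn1 n)) i) with inl j => v j | inr _ => t end.

Lemma muniXU (i : 'I_n.+1) :
  muni ('X_i : {mpoly R[n.+1]}) =
  match split (cast_ord (esym (addn1 n)) i) with inl j => ('X_j)%:P | inr _ => 'X end.
Proof. by rewrite /muni mmapX mmap1U. Qed.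

Lemma horner_meval_muni (v : 'I_n -> R) (t : R) (p : {mpoly R[n.+1]}) :
  (map_poly (meval v) (muni p)).[t] = p.@[extend_point v t].
Proof.
apply: (mpoly_morph_eq (f := fun p => (map_poly (meval v) (muni p)).[t])).
- by move=> x y; rewrite !raddfD /= hornerD.
- exact: mevalD.
- by move=> x y; rewrite !rmorphM /= hornerM.
- exact: mevalM.
- by move=> a; rewrite muniC map_polyC hornerC /= !mevalC.
move=> i; rewrite muniXU mevalXU /extend_point.
by case: splitP => j _; rewrite ?map_polyC ?map_polyX ?hornerC ?hornerX /= ?mevalXU.
Qed.

Lemma horner_mwiden_muni (p : {mpoly R[n.+1]}) :
  (map_poly (@mwiden n R) (muni p)).['X_ord_max] = p.
Proof.
apply: (mpoly_morph_eq (f := fun p => (map_poly (@mwiden n R) (muni p)).['X_ord_max])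
                       (g := id)) => //.
- by move=> x y; rewrite !raddfD /= hornerD.
- by move=> x y; rewrite !rmorphM /= hornerM.
- by move=> a; rewrite muniC map_polyC hornerC /= mwidenC.
move=> i; rewrite muniXU; case: splitP => j Hj.
  rewrite map_polyC hornerC /= mwidenX mnmwiden1; congr ('X_ _).
  by apply/val_inj; rewrite /= -Hj.
rewrite map_polyX hornerX; congr ('X_ _); apply/val_inj.
by move: Hj; rewrite ord1 /= addn0.
Qed.

End MuniEvaluation.

Section PolynomialIdentity.
Variable R : idomainType.
Hypothesis charR0 : [pchar R] =i pred0.

Lemma poly_eq0_of_eval (q : {poly R}) : (forall t, q.[t] = 0) -> q = 0.
Proof.
move=> q0; have /pcharf0P natr_eq0 := charR0.
apply: (@roots_geq_poly_eq0 _ q [seq i%:R | i <- iota 0 (size q)]).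
- by apply/allP => x /mapP [i _ ->]; rewrite /root q0.
- rewrite map_inj_uniq ?iota_uniq // => i j.
  wlog le_ij : i j / (i <= j)%N => [hwlog|].
    by case/orP: (leq_total i j) => [/hwlog h /h|/hwlog h /esym /h].
  move/eqP; rewrite eq_sym -subr_eq0 -natrB // natr_eq0 subn_eq0 => le_ji.
  by apply/eqP; rewrite eqn_leq le_ij.
- by rewrite size_map size_iota.
Qed.

Lemma mpoly_eq0_of_eval n (p : {mpoly R[n]}) : (forall v, p.@[v] = 0) -> p = 0.
Proof.
elim: n p => [|n IH] p p0.
  have constE : (p.@[fun _ => 0])%:MP = p.
    apply: (mpoly_morph_eq (f := fun q => (q.@[fun _ => 0])%:MP) (g := id)) => //.
    - by move=> x y; rewrite mevalD mpolyCD.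
    - by move=> x y; rewrite mevalM mpolyCM.
    - by move=> a; rewrite mevalC.
    - by case.
  by rewrite -constE p0.
suff muni0 : muni p = 0 by rewrite -(horner_mwiden_muni p) muni0 raddf0 horner0.
apply/polyP => k; rewrite coef0; apply: IH => v.
have : map_poly (meval v) (muni p) = 0.
  by apply: poly_eq0_of_eval => t; rewrite horner_meval_muni p0.
by move/(congr1 (fun q : {poly R} => q`_k)); rewrite coef_map coef0.
Qed.

End PolynomialIdentity.

Section LieAlgebra.
Variables (K : fieldType) (n m : nat) (c : 'I_n -> 'I_n -> 'I_n -> K).
Variable B : 'M[K]_(m, n).
Implicit Types (u v w eta : 'rV[K]_n) (hh : 'rV[K]_m) (P : polymap K n m).

Lemma liebDl u v w : lieb c (u + v) w = lieb c u w + lieb c v w.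
Proof.
apply/rowP => k; rewrite !mxE -big_split; apply: eq_bigr => i _.
by rewrite -big_split; apply: eq_bigr => j _; rewrite !mxE !mulrDl.
Qed.

Lemma liebDr u v w : lieb c u (v + w) = lieb c u v + lieb c u w.
Proof.
apply/rowP => k; rewrite !mxE -big_split; apply: eq_bigr => i _.
by rewrite -big_split; apply: eq_bigr => j _; rewrite !mxE mulrDr mulrDl.
Qed.

Lemma liebZl a u w : lieb c (a *: u) w = a *: lieb c u w.
Proof.
apply/rowP => k; rewrite !mxE mulr_sumr; apply: eq_bigr => i _.
by rewrite mulr_sumr; apply: eq_bigr => j _; rewrite !mxE !mulrA.
Qed.

Lemma liebZr a u w : lieb c u (a *: w) = a *: lieb c u w.
Proof.
apply/rowP => k; rewrite !mxE mulr_sumr; apply: eq_bigr => i _.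
by rewrite mulr_sumr; apply: eq_bigr => j _; rewrite !mxE mulrCA !mulrA.
Qed.

Lemma liebNr u w : lieb c u (- w) = - lieb c u w.
Proof. by rewrite -scaleN1r liebZr scaleN1r. Qed.

Hypothesis lie_c : is_lie c.

Lemma lieb_antisym u v : lieb c u v = - lieb c v u.
Proof.
have [alt _] := lie_c; apply/eqP; rewrite -subr_eq0 opprK.
by have := alt (u + v); rewrite liebDl !liebDr !alt add0r addr0 => ->.
Qed.

Lemma lieb_ad_commutator u v w :
  lieb c (lieb c u v) w = lieb c u (lieb c v w) - lieb c v (lieb c u w).
Proof.
have [_ jacobi] := lie_c; have := jacobi w u v.
rewrite (lieb_antisym w) (lieb_antisym w u) liebNr => J.
by rewrite -[LHS]addr0 -J !addrA addrN add0r.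
Qed.

Lemma pairhD hh u v : pairh B hh (u + v) = pairh B hh u + pairh B hh v.
Proof.
by rewrite /pairh -big_split; apply: eq_bigr => r _; rewrite mulmxDl mxE mulrDl.
Qed.

Lemma pairhZ hh a u : pairh B hh (a *: u) = a * pairh B hh u.
Proof.
by rewrite /pairh mulr_sumr; apply: eq_bigr => r _; rewrite -scalemxAl mxE mulrA.
Qed.

Lemma pairhN hh u : pairh B hh (- u) = - pairh B hh u.
Proof. by rewrite -scaleN1r pairhZ mulN1r. Qed.

Hypothesis ideal_B : comm_ideal c B.

Lemma in_St_lieb hh u v :
  in_St c B hh u -> in_St c B hh v -> in_St c B hh (lieb c u v).
Proof.
have [ideal _] := ideal_B; move=> Su Sv eta eta_h.
by rewrite lieb_ad_commutator pairhD pairhN Su ?Sv ?ideal // subrr.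
Qed.

Lemma pmap_evalD P1 P2 hh :
  pmap_eval (pmap_add P1 P2) hh = pmap_eval P1 hh + pmap_eval P2 hh.
Proof. by apply/rowP => k; rewrite !mxE mevalD. Qed.

Lemma pmap_evalZ a P hh : pmap_eval (pmap_scale a P) hh = a *: pmap_eval P hh.
Proof. by apply/rowP => k; rewrite !mxE mevalZ. Qed.

Lemma pmap_eval_br P1 P2 hh :
  pmap_eval (pmap_br c P1 P2) hh = lieb c (pmap_eval P1 hh) (pmap_eval P2 hh).
Proof.
apply/rowP => k; rewrite !mxE /pmap_br raddf_sum; apply: eq_bigr => i _.
rewrite raddf_sum; apply: eq_bigr => j _.
by rewrite /= mevalZ mevalM !mxE mulrC.
Qed.

Lemma stab_map_add P1 P2 :
  stab_map c B P1 -> stab_map c B P2 -> stab_map c B (pmap_add P1 P2).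
Proof.
by move=> S1 S2 hh eta eta_h; rewrite pmap_evalD liebDl pairhD S1 ?S2 // addr0.
Qed.

Lemma stab_map_scale a P : stab_map c B P -> stab_map c B (pmap_scale a P).
Proof. by move=> S hh eta eta_h; rewrite pmap_evalZ liebZl pairhZ S // mulr0. Qed.

Lemma stab_map_br P1 P2 :
  stab_map c B P1 -> stab_map c B P2 -> stab_map c B (pmap_br c P1 P2).
Proof. by move=> S1 S2 hh; rewrite pmap_eval_br; apply: in_St_lieb. Qed.

Lemma fPsi_add P1 P2 : fPsi B (pmap_add P1 P2) = fPsi B P1 + fPsi B P2.
Proof.
rewrite /fPsi -big_split; apply: eq_bigr => i _.
by rewrite /pmap_add comp_mpolyD mulrDr.
Qed.

Lemma fPsi_scale a P : fPsi B (pmap_scale a P) = a *: fPsi B P.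
Proof.
rewrite /fPsi scaler_sumr; apply: eq_bigr => i _.
by rewrite /pmap_scale comp_mpolyZ scalerAr.
Qed.

End LieAlgebra.

Section PointwiseBracket.
Variables (K : fieldType) (n m : nat) (c : 'I_n -> 'I_n -> 'I_n -> K).
Variable B : 'M[K]_(m, n).
Implicit Types (x : 'I_n -> K) (w : 'rV[K]_n) (f g : {mpoly K[n]}).

Definition pairg x w : K := \sum_(k < n) w 0 k * x k.

Definition proj_pt x : 'rV[K]_m := \row_r pairg x (row r B).

Definition grad x f : 'rV[K]_n := \row_i (mderiv i f).@[x].

Lemma pairgD x w1 w2 : pairg x (w1 + w2) = pairg x w1 + pairg x w2.
Proof. by rewrite /pairg -big_split; apply: eq_bigr => k _; rewrite mxE mulrDl. Qed.

Lemma pairgN x w : pairg x (- w) = - pairg x w.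
Proof. by rewrite /pairg -sumrN; apply: eq_bigr => k _; rewrite mxE mulNr. Qed.

Lemma pairg_proj x w : (w <= B)%MS -> pairg x w = pairh B (proj_pt x) w.
Proof.
move=> w_h; rewrite -{1}(mulmxKpV w_h) /pairh /pairg.
under eq_bigr => k _ do rewrite mxE mulr_suml.
rewrite exchange_big; apply: eq_bigr => r _.
rewrite /proj_pt mxE /pairg mulr_sumr; apply: eq_bigr => k _.
by rewrite [row _ _ _ _]mxE mulrA.
Qed.

Lemma meval_linS x w : (linS w).@[x] = pairg x w.
Proof. by rewrite raddf_sum; apply: eq_bigr => i _; rewrite /= mevalZ mevalXU. Qed.

Lemma meval_comp_pi x (p : {mpoly K[m]}) :
  (p \mPo pi_coord B).@[x] = p.@[fun r => proj_pt x 0 r].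
Proof.
by rewrite comp_mpoly_meval; apply: meval_eq => r; rewrite tnth_mktuple meval_linS mxE.
Qed.

Lemma meval_fPsi x (Psi : polymap K n m) :
  (fPsi B Psi).@[x] = pairg x (pmap_eval Psi (proj_pt x)).
Proof.
rewrite raddf_sum; apply: eq_bigr => i _.
by rewrite /= mevalM mevalXU meval_comp_pi mxE mulrC.
Qed.

Lemma meval_lpb x f g : (lpb c f g).@[x] = pairg x (lieb c (grad x f) (grad x g)).
Proof.
rewrite raddf_sum /pairg.
under [RHS]eq_bigr => k _ do rewrite mxE mulr_suml.
rewrite [RHS]exchange_big; apply: eq_bigr => i _; rewrite /= raddf_sum.
under [RHS]eq_bigr => k _ do rewrite mulr_suml.
rewrite [RHS]exchange_big; apply: eq_bigr => j _; rewrite /= raddf_sum.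
apply: eq_bigr => k _.
by rewrite /= mevalZ !mevalM mevalXU !mxE mulrCA [RHS]mulrC [_ * c i j k]mulrC.
Qed.

Lemma grad_linS x w : grad x (linS w) = w.
Proof.
apply/rowP => i; rewrite mxE /linS (raddf_sum (mderiv i)) raddf_sum (bigD1 i) //= big1 ?addr0.
  by rewrite mderivZ mderivXU eqxx mevalZ mevalC mulr1.
by move=> j /negbTE ji; rewrite mderivZ mderivXU ji mevalZ mevalC mulr0.
Qed.

Lemma grad_fPsi x (Psi : polymap K n m) :
  exists2 eta, (eta <= B)%MS & grad x (fPsi B Psi) = pmap_eval Psi (proj_pt x) + eta.
Proof.
pose d := \row_r \sum_(j < n) x j * (mderiv r (Psi j)).@[fun r => proj_pt x 0 r].
exists (d *m B); first exact: submxMl.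
apply/rowP => i; rewrite !mxE /fPsi (raddf_sum (mderiv i)) raddf_sum.
under eq_bigr => j _ do rewrite /= mderivM mevalD !mevalM mderivXU mevalC mevalXU.
rewrite big_split /= (bigD1 i) //= big1 ?addr0; last first.
  by move=> j /negbTE ji; rewrite ji mul0r.
rewrite eqxx mul1r meval_comp_pi; congr (_ + _).
under eq_bigr => j _ do rewrite mderiv_comp_mpoly raddf_sum mulr_sumr.
rewrite exchange_big; apply: eq_bigr => r _.
rewrite !mxE mulr_suml; apply: eq_bigr => j _.
rewrite /= mevalM meval_comp_pi tnth_mktuple mulrA; congr (_ * _).
by have := congr1 (fun v : 'rV[K]_n => v 0 i) (grad_linS x (row r B)); rewrite !mxE.
Qed.

End PointwiseBracket.

Section PoissonBracket.
Variables (K : fieldType) (n m : nat) (c : 'I_n -> 'I_n -> 'I_n -> K).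
Variable B : 'M[K]_(m, n).
Hypotheses (charK0 : [pchar K] =i pred0) (lie_c : is_lie c).
Hypothesis ideal_B : comm_ideal c B.

Lemma pairg_lieb_stab x (Psi : polymap K n m) eta :
  stab_map c B Psi -> (eta <= B)%MS ->
  pairg x (lieb c (pmap_eval Psi (proj_pt B x)) eta) = 0.
Proof.
have [ideal _] := ideal_B; move=> S eta_h.
by rewrite (pairg_proj (B := B)) ?ideal //; apply: S.
Qed.

Lemma fPsi_in_Ann (Psi : polymap K n m) : stab_map c B Psi -> inAnn c B (fPsi B Psi).
Proof.
have [_ abelian] := ideal_B; move=> S eta eta_h.
apply: (mpoly_eq0_of_eval charK0) => x.
rewrite meval_lpb grad_linS; have [eta' eta'_h ->] := grad_fPsi B x Psi.
by rewrite liebDl (abelian _ _ eta'_h eta_h) addr0 pairg_lieb_stab.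
Qed.

Lemma lpb_fPsi (P1 P2 : polymap K n m) :
  stab_map c B P1 -> stab_map c B P2 ->
  lpb c (fPsi B P1) (fPsi B P2) = fPsi B (pmap_br c P1 P2).
Proof.
have [_ abelian] := ideal_B; move=> S1 S2.
apply/eqP; rewrite -subr_eq0; apply/eqP; apply: (mpoly_eq0_of_eval charK0) => x.
rewrite mevalB meval_lpb meval_fPsi pmap_eval_br.
have [eta1 eta1_h ->] := grad_fPsi B x P1; have [eta2 eta2_h ->] := grad_fPsi B x P2.
rewrite !liebDl !liebDr (abelian _ _ eta1_h eta2_h) addr0 (lieb_antisym lie_c eta1).
rewrite !pairgD pairgN (pairg_lieb_stab x S1 eta2_h) (pairg_lieb_stab x S2 eta1_h).
by rewrite oppr0 !addr0 subrr.
Qed.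

End PoissonBracket.

Theorem lemma3 (K : fieldType) (n m : nat) (c : 'I_n -> 'I_n -> 'I_n -> K)
  (B : 'M[K]_(m, n)) :
  [pchar K] =i pred0 ->
  is_lie c -> row_free B -> comm_ideal c B ->
  (forall Psi : polymap K n m, stab_map c B Psi -> inAnn c B (fPsi B Psi)) /\
  (forall P1 P2 : polymap K n m, stab_map c B P1 -> stab_map c B P2 ->
     [/\ stab_map c B (pmap_add P1 P2),
         (forall a : K, stab_map c B (pmap_scale a P1)) &
         stab_map c B (pmap_br c P1 P2)] /\
     [/\ fPsi B (pmap_add P1 P2) = fPsi B P1 + fPsi B P2,
         (forall a : K, fPsi B (pmap_scale a P1) = a *: fPsi B P1) &
         lpb c (fPsi B P1) (fPsi B P2) = fPsi B (pmap_br c P1 P2)]).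
Proof.
(* [pairh] reads coordinates through [pinvmx B], so [B] need not be row-free. *)
move=> charK0 lie_c _ ideal_B; split; first exact: fPsi_in_Ann.
move=> P1 P2 S1 S2; split; split.
- exact: stab_map_add.
- by move=> a; apply: stab_map_scale.
- exact: stab_map_br.
- exact: fPsi_add.
- by move=> a; apply: fPsi_scale.
- exact: lpb_fPsi.
Qed.
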